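(* Let $\alpha\in\mathbb{N}_0$ and let $L_{2\alpha+4,x}^{\alpha}y(x)=(-1)^{\alpha+1}e^x x\,D_x^{\alpha+2}\{e^{-x}D_x^{\alpha+2}[x^{\alpha+1}y(x)]\}$. Then for all $n\in\mathbb{N}$, $$\big[L_{2\alpha+4,x}^{\alpha}+(n)_{\alpha+2}\big]T_n^{\alpha}(x)=0,\qquad 0\le x<\infty.$$
   Context: $D_x^i$ is the $i$-fold derivative; $(a)_k$ is the Pochhammer symbol. $L_n^{\gamma}(x)=\frac{(\gamma+1)_n}{n!}{}_1F_1(-n;\gamma+1;x)$ are the Laguerre polynomials, and for $n\ge1$, $T_n^{\alpha}(x)=-t_n^{\alpha}\,x\,L_{n-1}^{\alpha+2}(x)$ with $t_n^{\alpha}=(\alpha+2)_{n-1}/n!$. *)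

From Stdlib Require Import Arith Factorial Reals ClassicalEpsilon.
Open Scope R_scope.

Fixpoint poch (a : R) (k : nat) : R :=
  match k with
  | O => 1
  | S k' => poch a k' * (a + INR k')
  end.

(* Terminating confluent hypergeometric series 1F1(-n; b; x).
   Since (-n)_k = 0 for k > n, the series is the finite sum over k = 0..n. *)
Definition hyp1F1_neg (n : nat) (b x : R) : R :=
  sum_f_R0 (fun k => poch (- INR n) k / poch b k * x ^ k / INR (fact k)) n.

Definition Laguerre (n : nat) (gamma x : R) : R :=
  poch (gamma + 1) n / INR (fact n) * hyp1F1_neg n (gamma + 1) x.

Definition tcoef (n alpha : nat) : R :=
  poch (INR alpha + 2) (n - 1) / INR (fact n).

Definition Tpoly (n alpha : nat) (x : R) : R :=
  - tcoef n alpha * x * Laguerre (n - 1) (INR alpha + 2) x.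

(* Derivative of f at x (the unique l with derivable_pt_lim f x l when
   f is differentiable at x; an unspecified value otherwise). *)
Definition deriv (f : R -> R) : R -> R :=
  fun x => epsilon (inhabits 0) (fun l => derivable_pt_lim f x l).

Fixpoint Dn (i : nat) (f : R -> R) : R -> R :=
  match i with
  | O => f
  | S i' => deriv (Dn i' f)
  end.

Definition Lop (alpha : nat) (y : R -> R) (x : R) : R :=
  (-1) ^ (alpha + 1) * exp x * x *
  Dn (alpha + 2) (fun t => exp (- t) * Dn (alpha + 2) (fun s => s ^ (alpha + 1) * y s) t) x.

(* Put m = n - 1, so that x^(α+1) T_n^α(x) = -t x^(α+2) L_m^(α+2)(x).  Two
   Rodrigues-type identities evaluate the operator in closed form:
     D^g [x^g L_m^g] = (m+g)!/m! L_m      and      D^j [e^-x L_m] = (-1)^j e^-x L_m^j,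
   whence L^α T_n^α = -(m+α+2)!/m! T_n^α = -(n)_(α+2) T_n^α.  Both identities are
   checked on coefficients, L_m^g having the coefficients (-1)^k C(m+g, m-k) / k!;
   the second one is Pascal's rule. *)

From Stdlib Require Import Factorial Reals Binomial Lia ClassicalEpsilon FunctionalExtensionality.
Open Scope R_scope.

Lemma deriv_of_derivable_pt_lim f x l : derivable_pt_lim f x l -> deriv f x = l.
Proof.
  intro Hl. apply (uniqueness_limite f x); [|exact Hl].
  apply (epsilon_spec (inhabits 0) (fun l => derivable_pt_lim f x l)).
  now exists l.
Qed.

Definition poly (c : nat -> R) (N : nat) (x : R) : R :=
  sum_f_R0 (fun k => c k * x ^ k) N.

Definition deg_le (c : nat -> R) (N : nat) : Prop :=
  forall k, (N < k)%nat -> c k = 0.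

Definition deriv_coef (c : nat -> R) : nat -> R := fun k => INR (S k) * c (S k).

(* Coefficients of q in (e^-x p)' = e^-x q, where p has coefficients c. *)
Definition expN_deriv_coef (c : nat -> R) : nat -> R := fun k => deriv_coef c k - c k.

Definition shift_coef (b : nat) (c : nat -> R) : nat -> R :=
  fun k => if Nat.leb b k then c (k - b)%nat else 0.

Lemma poly_minus c d N x : poly (fun k => c k - d k) N x = poly c N x - poly d N x.
Proof. unfold poly. rewrite <- minus_sum. apply sum_eq. intros. ring. Qed.

Lemma poly_scal (K : R) c N x : poly (fun k => K * c k) N x = K * poly c N x.
Proof. unfold poly. rewrite scal_sum. apply sum_eq. intros. ring. Qed.

Lemma poly_extend c m d x : deg_le c m -> poly c (m + d) x = poly c m x.
Proof.
  intro Hc. induction d as [|d IHd]; [now rewrite Nat.add_0_r|].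
  rewrite Nat.add_succ_r. unfold poly in *. simpl sum_f_R0.
  rewrite IHd, Hc by lia. ring.
Qed.

Lemma sum_f_R0_shift b : forall m h,
  sum_f_R0 (fun k => if Nat.leb b k then h (k - b)%nat else 0) (m + b) = sum_f_R0 h m.
Proof.
  induction b as [|b IHb]; intros m h.
  - rewrite Nat.add_0_r. apply sum_eq. intros i _. now rewrite Nat.sub_0_r.
  - rewrite Nat.add_succ_r, decomp_sum by lia. simpl Nat.leb at 1.
    rewrite Rplus_0_l. apply IHb.
Qed.

Lemma poly_shift_coef b c m x : x ^ b * poly c m x = poly (shift_coef b c) (m + b) x.
Proof.
  unfold poly, shift_coef.
  transitivity (sum_f_R0 (fun k => if Nat.leb b k then
      (fun j => c j * x ^ (j + b)) (k - b)%nat else 0) (m + b)).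
  - rewrite (sum_f_R0_shift b m (fun j => c j * x ^ (j + b))), scal_sum. apply sum_eq. intros j _. rewrite pow_add. ring.
  - apply sum_eq. intros k _. destruct (Nat.leb b k) eqn:Hbk; [|ring].
    apply Nat.leb_le in Hbk. now replace (k - b + b)%nat with k by lia.
Qed.

Lemma derivable_pt_lim_poly_trunc c N x :
  derivable_pt_lim (poly c N) x (poly (deriv_coef c) N x - INR (S N) * c (S N) * x ^ N).
Proof.
  induction N as [|N IHN].
  - change (poly c 0) with (fct_cte (c 0%nat * 1)).
    replace (_ - _) with 0 by (unfold poly, deriv_coef; simpl; ring).
    apply derivable_pt_lim_const.
  - change (poly c (S N))
      with (plus_fct (poly c N) (mult_real_fct (c (S N)) (fun y => y ^ S N))).
    replace (_ - _) with ((poly (deriv_coef c) N x - INR (S N) * c (S N) * x ^ N)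
                          + c (S N) * (INR (S N) * x ^ Init.Nat.pred (S N)))
      by (unfold poly, deriv_coef; cbn [sum_f_R0 Init.Nat.pred pow]; ring).
    apply derivable_pt_lim_plus; [exact IHN|].
    apply derivable_pt_lim_scal, derivable_pt_lim_pow.
Qed.

Lemma derivable_pt_lim_poly c N x :
  c (S N) = 0 -> derivable_pt_lim (poly c N) x (poly (deriv_coef c) N x).
Proof.
  intro Hc. pose proof (derivable_pt_lim_poly_trunc c N x) as D. rewrite Hc in D.
  now replace (poly (deriv_coef c) N x - _) with (poly (deriv_coef c) N x) in D by ring.
Qed.

Lemma derivable_pt_lim_expN_poly c N x : c (S N) = 0 ->
  derivable_pt_lim (fun s => exp (- s) * poly c N s) x
    (exp (- x) * poly (expN_deriv_coef c) N x).
Proof.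
  intro Hc.
  change (fun s => exp (- s) * poly c N s) with (mult_fct (comp exp (opp_fct id)) (poly c N)).
  replace (exp (- x) * _) with
    ((exp (- x) * - 1) * poly c N x + exp (- x) * poly (deriv_coef c) N x)
    by (unfold expN_deriv_coef; rewrite poly_minus; ring).
  assert (Hexp : derivable_pt_lim (comp exp (opp_fct id)) x (exp (- x) * - 1)).
  { apply derivable_pt_lim_comp.
    - apply derivable_pt_lim_opp, derivable_pt_lim_id.
    - apply derivable_pt_lim_exp. }
  exact (derivable_pt_lim_mult _ _ x _ _ Hexp (derivable_pt_lim_poly c N x Hc)).
Qed.

Lemma deg_le_deriv_coef c N : deg_le c N -> deg_le (deriv_coef c) N.
Proof. intros Hc k Hk. unfold deriv_coef. rewrite Hc by lia. ring. Qed.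

Lemma deg_le_expN_deriv_coef c N : deg_le c N -> deg_le (expN_deriv_coef c) N.
Proof.
  intros Hc k Hk. unfold expN_deriv_coef.
  rewrite (deg_le_deriv_coef c N Hc k Hk), Hc by lia. ring.
Qed.

Lemma deg_le_iter f i c N : (forall d, deg_le d N -> deg_le (f d) N) ->
  deg_le c N -> deg_le (Nat.iter i f c) N.
Proof. intros Hf Hc. induction i; [exact Hc|]. now apply Hf. Qed.

Lemma Dn_poly i c N : deg_le c N -> Dn i (poly c N) = poly (Nat.iter i deriv_coef c) N.
Proof.
  intro Hc. induction i as [|i IHi]; [reflexivity|].
  simpl Dn. rewrite IHi. apply functional_extensionality; intro x.
  apply deriv_of_derivable_pt_lim, derivable_pt_lim_poly.
  apply (deg_le_iter _ i _ _ (fun d => deg_le_deriv_coef d N) Hc). lia.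
Qed.

Lemma Dn_expN_poly i c N : deg_le c N ->
  Dn i (fun s => exp (- s) * poly c N s)
  = (fun s => exp (- s) * poly (Nat.iter i expN_deriv_coef c) N s).
Proof.
  intro Hc. induction i as [|i IHi]; [reflexivity|].
  simpl Dn. rewrite IHi. apply functional_extensionality; intro x.
  apply deriv_of_derivable_pt_lim, derivable_pt_lim_expN_poly.
  apply (deg_le_iter _ i _ _ (fun d => deg_le_expN_deriv_coef d N) Hc). lia.
Qed.

Lemma iter_deriv_coef i : forall c k,
  Nat.iter i deriv_coef c k = INR (fact (k + i)) / INR (fact k) * c (k + i)%nat.
Proof.
  induction i as [|i IHi]; intros c k.
  - simpl. rewrite Nat.add_0_r. field. apply INR_fact_neq_0.
  - simpl Nat.iter. unfold deriv_coef at 1. rewrite IHi.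
    replace (S k + i)%nat with (k + S i)%nat by lia.
    change (fact (S k)) with (S k * fact k)%nat. rewrite mult_INR.
    field. split; [apply INR_fact_neq_0 | apply not_0_INR; lia].
Qed.

Lemma poch_INR_succ j k : poch (INR j + 1) k = INR (fact (j + k)) / INR (fact j).
Proof.
  induction k as [|k IHk].
  - simpl. rewrite Nat.add_0_r. field. apply INR_fact_neq_0.
  - simpl poch. rewrite IHk, Nat.add_succ_r.
    change (fact (S (j + k))) with (S (j + k) * fact (j + k))%nat.
    rewrite mult_INR, S_INR, plus_INR. field. apply INR_fact_neq_0.
Qed.

Lemma poch_opp_INR m k : (k <= m)%nat ->
  poch (- INR m) k = (-1) ^ k * INR (fact m) / INR (fact (m - k)).
Proof.
  induction k as [|k IHk]; intro Hk.
  - simpl. rewrite Nat.sub_0_r. field. apply INR_fact_neq_0.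
  - simpl poch. rewrite IHk by lia.
    assert (Em : (m - k = S (m - S k))%nat) by lia.
    assert (Ek : INR (S (m - S k)) = INR m - INR k)
      by (rewrite <- Em; apply minus_INR; lia).
    assert (INR m - INR k <> 0) by (rewrite <- Ek; apply not_0_INR; lia).
    rewrite Em. change (fact (S (m - S k))) with (S (m - S k) * fact (m - S k))%nat.
    rewrite mult_INR, Ek. simpl pow.
    field. split; [apply INR_fact_neq_0 | assumption].
Qed.

Definition laguerre_coef (m g k : nat) : R :=
  if Nat.leb k m then (-1) ^ k * C (m + g) (m - k) / INR (fact k) else 0.

Lemma deg_le_laguerre_coef m g : deg_le (laguerre_coef m g) m.
Proof.
  intros k Hk. unfold laguerre_coef.
  now replace (Nat.leb k m) with false by (symmetry; apply Nat.leb_gt; lia).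
Qed.

Lemma Laguerre_poly m g x : Laguerre m (INR g) x = poly (laguerre_coef m g) m x.
Proof.
  unfold Laguerre, hyp1F1_neg, poly. rewrite scal_sum. apply sum_eq. intros k Hk.
  unfold laguerre_coef. replace (Nat.leb k m) with true by (symmetry; apply Nat.leb_le; lia).
  rewrite !poch_INR_succ, poch_opp_INR by lia. unfold C.
  replace (m + g - (m - k))%nat with (g + k)%nat by lia.
  rewrite (Nat.add_comm m g). field. repeat split; apply INR_fact_neq_0.
Qed.

Lemma fact_ratio_laguerre_coef m g k :
  INR (fact (k + g)) / INR (fact k) * laguerre_coef m g k
  = INR (fact (m + g)) / INR (fact m) * laguerre_coef m 0 k.
Proof.
  unfold laguerre_coef. destruct (Nat.leb k m) eqn:Hkm; [|ring].
  apply Nat.leb_le in Hkm. unfold C.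
  replace (m + g - (m - k))%nat with (k + g)%nat by lia.
  replace (m + 0 - (m - k))%nat with k by lia. rewrite Nat.add_0_r.
  field. repeat split; apply INR_fact_neq_0.
Qed.

Lemma expN_deriv_laguerre_coef m g k :
  expN_deriv_coef (laguerre_coef m g) k = - laguerre_coef m (S g) k.
Proof.
  unfold expN_deriv_coef, deriv_coef, laguerre_coef.
  destruct (Nat.lt_total k m) as [Hlt | [-> | Hgt]].
  - replace (Nat.leb (S k) m) with true by (symmetry; apply Nat.leb_le; lia).
    replace (Nat.leb k m) with true by (symmetry; apply Nat.leb_le; lia).
    pose proof (pascal (m + g) (m - S k)) as Hp.
    replace (S (m - S k)) with (m - k)%nat in Hp by lia.
    replace (S (m + g)) with (m + S g)%nat in Hp by lia.
    rewrite <- Hp by lia.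
    change (fact (S k)) with (S k * fact k)%nat. rewrite mult_INR. simpl pow.
    field. split; [apply INR_fact_neq_0 | apply not_0_INR; lia].
  - replace (Nat.leb (S m) m) with false by (symmetry; apply Nat.leb_gt; lia).
    rewrite Nat.leb_refl, Nat.sub_diag. unfold C. rewrite !Nat.sub_0_r.
    field. repeat split; apply INR_fact_neq_0.
  - replace (Nat.leb (S k) m) with false by (symmetry; apply Nat.leb_gt; lia).
    replace (Nat.leb k m) with false by (symmetry; apply Nat.leb_gt; lia). ring.
Qed.

Lemma iter_expN_deriv_laguerre_coef K m i k :
  Nat.iter i expN_deriv_coef (fun k => K * laguerre_coef m 0 k) k
  = K * (-1) ^ i * laguerre_coef m i k.
Proof.
  revert k. induction i as [|i IHi]; intro k; [simpl; ring|].
  simpl Nat.iter. unfold expN_deriv_coef at 1, deriv_coef. rewrite !IHi.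
  pose proof (expN_deriv_laguerre_coef m i k) as Hi.
  unfold expN_deriv_coef, deriv_coef in Hi.
  transitivity (K * (-1) ^ i * (INR (S k) * laguerre_coef m i (S k) - laguerre_coef m i k));
    [ring | rewrite Hi; simpl pow; ring].
Qed.

Lemma Dn_pow_Laguerre K m g :
  Dn g (fun s => K * (s ^ g * Laguerre m (INR g) s))
  = (fun s => K * (INR (fact (m + g)) / INR (fact m)) * Laguerre m 0 s).
Proof.
  set (c := fun k => K * shift_coef g (laguerre_coef m g) k).
  assert (Hc : deg_le c (m + g)).
  { intros k Hk. unfold c, shift_coef.
    destruct (Nat.leb g k); [rewrite deg_le_laguerre_coef by lia|]; ring. }
  replace (fun s => K * _) with (poly c (m + g)); cycle 1.
  { apply functional_extensionality; intro s.
    now rewrite Laguerre_poly, poly_shift_coef, <- poly_scal. }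
  rewrite Dn_poly by exact Hc. apply functional_extensionality; intro s.
  change 0 with (INR 0). rewrite Laguerre_poly, <- poly_scal.
  rewrite <- (poly_extend _ m g s) by (intros k Hk; rewrite deg_le_laguerre_coef by lia; ring).
  f_equal. apply functional_extensionality; intro k.
  rewrite iter_deriv_coef. unfold c, shift_coef.
  replace (Nat.leb g (k + g)) with true by (symmetry; apply Nat.leb_le; lia).
  replace (k + g - g)%nat with k by lia.
  transitivity (K * (INR (fact (k + g)) / INR (fact k) * laguerre_coef m g k));
    [ring | rewrite fact_ratio_laguerre_coef; ring].
Qed.

Lemma Dn_expN_Laguerre K m j :
  Dn j (fun s => exp (- s) * (K * Laguerre m 0 s))
  = (fun s => K * (-1) ^ j * exp (- s) * Laguerre m (INR j) s).
Proof.
  replace (fun s => exp (- s) * _)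
    with (fun s => exp (- s) * poly (fun k => K * laguerre_coef m 0 k) m s); cycle 1.
  { apply functional_extensionality; intro s.
    change 0 with (INR 0). now rewrite Laguerre_poly, poly_scal. }
  rewrite Dn_expN_poly; cycle 1.
  { intros k Hk. rewrite deg_le_laguerre_coef by lia. ring. }
  apply functional_extensionality; intro s. rewrite Laguerre_poly.
  replace (Nat.iter j _ _) with (fun k => K * (-1) ^ j * laguerre_coef m j k)
    by (apply functional_extensionality; intro k;
        symmetry; apply iter_expN_deriv_laguerre_coef).
  rewrite poly_scal. ring.
Qed.

Lemma Tpoly_Laguerre m alpha s :
  Tpoly (S m) alpha s = - tcoef (S m) alpha * s * Laguerre m (INR (alpha + 2)) s.
Proof.
  unfold Tpoly. replace (S m - 1)%nat with m by lia.
  now rewrite plus_INR.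
Qed.

Theorem corollary2p2 (alpha n : nat) (hn : (1 <= n)%nat) (x : R) (hx : 0 <= x) :
  Lop alpha (Tpoly n alpha) x + poch (INR n) (alpha + 2) * Tpoly n alpha x = 0.
Proof.
  (* The identity is polynomial in x. *)
  destruct n as [|m]; [lia|].
  set (t := tcoef (S m) alpha).
  set (F := INR (fact (m + (alpha + 2))) / INR (fact m)).
  assert (Hpow : (fun s => s ^ (alpha + 1) * Tpoly (S m) alpha s)
               = (fun s => - t * (s ^ (alpha + 2) * Laguerre m (INR (alpha + 2)) s))).
  { apply functional_extensionality; intro s. rewrite Tpoly_Laguerre. fold t.
    replace (alpha + 2)%nat with (S (alpha + 1)) by lia. simpl pow. ring. }
  assert (Hsign : (-1) ^ (alpha + 1) * (-1) ^ (alpha + 2) = -1).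
  { rewrite <- pow_add.
    replace (alpha + 1 + (alpha + 2))%nat with (S (2 * (alpha + 1))) by lia.
    apply pow_1_odd. }
  unfold Lop. rewrite Hpow, Dn_pow_Laguerre. fold F.
  rewrite Dn_expN_Laguerre, Tpoly_Laguerre, S_INR, poch_INR_succ. fold F t.
  transitivity ((-1) ^ (alpha + 1) * (-1) ^ (alpha + 2) * (exp x * exp (- x))
                * - t * F * x * Laguerre m (INR (alpha + 2)) x
                - t * F * x * Laguerre m (INR (alpha + 2)) x); [ring|].
  rewrite Hsign, <- exp_plus, Rplus_opp_r, exp_0. ring.
Qed.
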